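(* For $0\le k\le n$, $$\alpha_{H_n^k}\cong \omega_{n,k}\big\uparrow^{S_n\times S_n}_{(S_k\times S_{n-k})\times(S_k\times S_{n-k})}.$$
   Context: Permutations are composed as functions, and $\pi\in S_n$ is identified with the permutation matrix whose $(i,j)$ entry is $1$ iff $i=\pi(j)$. $U_{n,k}$ is the $n\times n$ $(0,1)$-matrix whose upper left $k\times k$ block is upper triangular with all entries on and above the diagonal equal to $1$, whose upper right $k\times(n-k)$ block has all entries $1$, whose lower left block is zero and whose lower right block is $I_{n-k}$. $H_n^k=\{\pi U_{n,k}\sigma\mid\pi,\sigma\in S_n\}$, and $\alpha_{H_n^k}$ is the complex permutation representation of $S_n\times S_n$ on the space with basis $H_n^k$ given by $(\pi,\sigma)\bullet A=\pi A\sigma^{-1}$. $S_k\times S_{n-k}\le S_n$ is the subgroup of permutations preserving $\{1,\dots,k\}$ (and hence $\{k+1,\dots,n\}$). $W_n^k=\{\pi U_{n,k}\sigma\mid \pi,\sigma\in S_k\times S_{n-k}\}$ is the orbit of $U_{n,k}$ under the restricted action of $(S_k\times S_{n-k})\times(S_k\times S_{n-k})$, and $\omega_{n,k}$ is the corresponding permutation representation of $(S_k\times S_{n-k})\times(S_k\times S_{n-k})$ on the space with basis $W_n^k$. *)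

From mathcomp Require Import all_boot all_order all_algebra all_fingroup.
From mathcomp Require Import all_solvable all_field all_character.
Set Implicit Arguments. Unset Strict Implicit. Unset Printing Implicit Defensive.
Import GRing.Theory Num.Theory.
Local Open Scope ring_scope.


Section Defs.
Variable n k : nat.

Definition SS := ('S_n * 'S_n)%type.

Definition pmat (pi : 'S_n) : 'M[int]_n := \matrix_(i, j) ((i == pi j)%:R).

(* U_{n,k} (indices 0..n-1; the first k indices form the upper-left block). *)
Definition Unk : 'M[int]_n :=
  \matrix_(i, j) (if (i < k)%N then (if (j < k)%N then ((i <= j)%N)%:R else 1)
                  else ((i == j))%:R).

Definition act (x : SS) (A : 'M[int]_n) : 'M[int]_n :=
  (pmat x.1 *m A *m pmat (x.2)^-1%g)%R.

(* S_k x S_{n-k} : permutations preserving {0,..,k-1} *)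
Definition Ykn : {set 'S_n} :=
  [set s : 'S_n | s @: [set i : 'I_n | (i < k)%N] == [set i : 'I_n | (i < k)%N]].

Definition Hsub : {set SS} := setX Ykn Ykn.

Definition Hnk : seq 'M[int]_n := undup [seq act x Unk | x <- enum [set: SS]].

Definition Wnk : seq 'M[int]_n := undup [seq act x Unk | x <- enum Hsub].
End Defs.

(* Permutation representation on the basis B (row-vector convention, as in
   MathComp's mx_representation): e_i * rep x = e_j where B_j = x . B_i. *)
Definition perm_rep n (B : seq 'M[int]_n) (x : SS n) : 'M[algC]_(size B) :=
  \matrix_(i, j) ((nth 0%R B j == act x (nth 0%R B i))%:R).

Definition transv (gT : finGroupType) (H : {set gT}) : seq gT :=
  enum (transversal (rcosets H [set: gT]) [set: gT]).

Definition ind_rep (gT : finGroupType) (H : {set gT}) d (r : gT -> 'M[algC]_d)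
  (x : gT) :=
  let T := transv H in
  (\mxblock_(i < size T, j < size T)
     (let y := (nth 1%g T i * x * (nth 1%g T j)^-1)%g in
      if y \in H then r y else 0 : 'M[algC]_(d, d)))%R.

Definition rep_iso (gT : finGroupType) (G : {set gT}) n1 n2
  (r1 : gT -> 'M[algC]_n1) (r2 : gT -> 'M[algC]_n2) : Prop :=
  n1 = n2 /\ exists B : 'M[algC]_(n1, n2),
    row_free B /\ forall x, x \in G -> (r1 x *m B = B *m r2 x)%R.

From Pilot Require Import Defs.
From mathcomp Require Import all_boot all_order all_algebra all_fingroup.
From mathcomp Require Import all_solvable all_field all_character.
Set Implicit Arguments. Unset Strict Implicit. Unset Printing Implicit Defensive.
Import GRing.Theory Num.Theory.
Local Open Scope ring_scope.

(* H_n^k is the orbit of U = U_{n,k} under G = S_n x S_n and W_n^k its orbit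
   under K = (S_k x S_{n-k})^2. The stabiliser of U lies in K: rows of U of
   index >= k contain a single 1 while the others contain at least two, and a
   column of index < k has no 1 outside the first k rows. So if t_1, ..., t_m
   represent the right cosets of K in G, every point of the G-orbit is
   uniquely w . t_j with w in the K-orbit, and the 0/1 matrix of this
   bijection intertwines the permutation representation of G on H_n^k with
   the block matrices of the representation induced from W_n^k. *)

Lemma sum_nth_eq (T : eqType) (R : pzSemiRingType) (x0 t : T) (s : seq T)
    (f : T -> R) :
  uniq s -> t \in s ->
  \sum_(i < size s) (nth x0 s i == t)%:R * f (nth x0 s i) = f t.
Proof.
move=> s_uniq st; pose i0 := Ordinal (etrans (index_mem t s) st).
have nth_i0 : nth x0 s i0 = t by rewrite nth_index.
rewrite (bigD1 i0) //= nth_i0 eqxx mul1r big1 ?addr0 // => i ne_i_i0.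
by rewrite -nth_i0 nth_uniq // val_eqE (negbTE ne_i_i0) mul0r.
Qed.

Section OrbitSeq.
Variables (gT : finGroupType) (T : eqType) (to : T -> gT -> T).
Hypotheses (to1 : forall t, to t 1%g = t)
           (toM : forall t x y, to t (x * y)%g = to (to t x) y).

Lemma toK x : cancel (to^~ x) (to^~ x^-1%g).
Proof. by move=> t; rewrite -toM mulgV to1. Qed.

Lemma to_inj x : injective (to^~ x).
Proof. exact: can_inj (toK x). Qed.

Lemma eq_toV t s x : (t == to s x) = (to t x^-1 == s).
Proof. by rewrite -(inj_eq (@to_inj x^-1)) toK. Qed.

Definition orbit_seq (A : {set gT}) u := undup [seq to u x | x <- enum A].

Lemma orbit_seq_uniq (A : {set gT}) u : uniq (orbit_seq A u).
Proof. exact: undup_uniq. Qed.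

Lemma orbit_seqP (A : {set gT}) u t :
  reflect (exists2 g, g \in A & t = to u g) (t \in orbit_seq A u).
Proof.
rewrite mem_undup; apply: (iffP mapP) => [[g Ag ->]|[g Ag ->]].
  by exists g; rewrite // -mem_enum.
by exists g; rewrite // mem_enum.
Qed.

Lemma orbit_seq_to (G : {group gT}) u t x :
  t \in orbit_seq G u -> x \in G -> to t x \in orbit_seq G u.
Proof.
case/orbit_seqP=> g Gg -> Gx.
by apply/orbit_seqP; exists (g * x)%g; rewrite ?groupM ?toM.
Qed.

Lemma orbit_seqS (A B : {set gT}) u :
  A \subset B -> {subset orbit_seq A u <= orbit_seq B u}.
Proof.
move=> sAB t /orbit_seqP[g Ag ->].
by apply/orbit_seqP; exists g; rewrite ?(subsetP sAB).
Qed.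

Definition seq_rep d (B : seq T) (x : gT) : 'M[algC]_(size B) :=
  \matrix_(i, j) ((nth d B j == to (nth d B i) x)%:R).

End OrbitSeq.

Section Transversal.
Variables (gT : finGroupType) (H : {group gT}).
Local Notation m := (size (transv H)).
Local Notation t_ j := (nth 1%g (transv H) j).
Local Notation X := (transversal (rcosets H [set: gT]) [set: gT]).

Lemma transv_meet_rcoset g : exists t, X :&: (H :* g)%g = [set t].
Proof.
have := transversalP (rcosets_partition (subsetT H)).
case/and3P=> _ _ /forall_inP X1.
by apply/cards1P/X1/rcosetsP; exists g.
Qed.

Lemma transv_rcoset_ex g : exists j : 'I_m, g \in (H :* t_ j)%g.
Proof.
have [t Xg] := transv_meet_rcoset g.
have /setIP[Xt tHg] : t \in X :&: (H :* g)%g by rewrite Xg set11.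
have tX : t \in transv H by rewrite mem_enum.
by exists (Ordinal (etrans (index_mem t _) tX)); rewrite /= nth_index // rcoset_sym.
Qed.

Lemma transv_rcoset_inj (i j : 'I_m) : t_ i \in (H :* t_ j)%g -> i = j.
Proof.
move=> Hij; have [t Xj] := transv_meet_rcoset (t_ j).
have Xt (l : 'I_m) : t_ l \in X by rewrite -mem_enum mem_nth.
have : t_ i \in X :&: (H :* t_ j)%g by rewrite inE Xt.
have : t_ j \in X :&: (H :* t_ j)%g by rewrite inE Xt rcoset_refl.
rewrite Xj !inE => /eqP ej /eqP ei; apply/val_inj/eqP.
by rewrite -(nth_uniq 1%g (ltn_ord i) (ltn_ord j)) ?enum_uniq // ei ej.
Qed.

Lemma transv_block_unique x (l : 'I_m) :
  exists j0 : 'I_m, forall j : 'I_m, (t_ j * x * (t_ l)^-1 \in H)%g = (j == j0).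
Proof.
have [j0 lj0] := transv_rcoset_ex (t_ l * x^-1)%g.
have rcoset_j0 (j : 'I_m) :
    (t_ j * x * (t_ l)^-1 \in H)%g = (t_ j \in (H :* t_ j0)%g).
  by rewrite -(rcoset_eqP lj0) mem_rcoset !invMg invgK mulgA.
exists j0 => j; rewrite rcoset_j0; apply/idP/eqP => [|->]; last exact: rcoset_refl.
exact: transv_rcoset_inj.
Qed.

End Transversal.

Section InducedOrbitRep.
Variables (gT : finGroupType) (T : eqType) (d : T) (to : T -> gT -> T).
Hypotheses (to1 : forall t, to t 1%g = t)
           (toM : forall t x y, to t (x * y)%g = to (to t x) y).
Variables (H : {group gT}) (u : T).
Hypothesis stab_sub : forall g, to u g = u -> g \in H.

Local Notation m := (size (transv H)).
Local Notation t_ j := (nth 1%g (transv H) j).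
Local Notation Ho := (orbit_seq to [set: gT] u).
Local Notation Wo := (orbit_seq to H u).

Lemma to_eq_rcoset g g' : to u g = to u g' -> g \in (H :* g')%g.
Proof.
by move=> e; rewrite mem_rcoset stab_sub // toM e -toM mulgV to1.
Qed.

Lemma orbit_decomp t :
  t \in Ho -> exists j : 'I_m, exists2 v, v \in Wo & t = to v (t_ j).
Proof.
case/orbit_seqP=> g _ ->; have [j gHj] := transv_rcoset_ex H g.
exists j, (to u (g * (t_ j)^-1)%g); last by rewrite -toM mulgKV.
by apply/orbit_seqP; exists (g * (t_ j)^-1)%g; rewrite -?mem_rcoset.
Qed.

Lemma orbit_decomp_inj (i j : 'I_m) v v' :
  v \in Wo -> v' \in Wo -> to v (t_ i) = to v' (t_ j) -> i = j /\ v = v'.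
Proof.
move=> /orbit_seqP[g Hg ->] /orbit_seqP[g' Hg' ->]; rewrite -!toM => e.
suff eij : i = j by split=> //; move: e; rewrite eij !toM => /to_inj->.
apply: transv_rcoset_inj; move/to_eq_rcoset: e; rewrite !mem_rcoset => Hgg'.
have -> : (t_ i * (t_ j)^-1 = g^-1 * (g * t_ i * (g' * t_ j)^-1) * g')%g.
  by rewrite invMg !mulgA mulVg mul1g mulgKV.
by rewrite groupMr // groupMl ?groupV.
Qed.

Definition decomp_blk (j : 'I_m) : 'M[algC]_(size Ho, size Wo) :=
  \matrix_(h, w) ((nth d Ho h == to (nth d Wo w) (t_ j))%:R).

Definition decomp_mx := \mxrow_j decomp_blk j.

Lemma mem_orbit_transv (w : 'I_(size Wo)) j : to (nth d Wo w) (t_ j) \in Ho.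
Proof.
apply: (orbit_seq_to toM); rewrite ?inE //.
exact/(orbit_seqS (subsetT H))/mem_nth.
Qed.

Lemma decomp_mx_mulT : decomp_mx *m decomp_mx^T = 1%:M.
Proof.
rewrite tr_mxrow mul_mxrow_mxcol; apply/matrixP => h h'; rewrite summxE !mxE.
have [j0 [v Wv def_h]] := orbit_decomp (mem_nth d (ltn_ord h)).
rewrite (bigD1 j0) //= big1 ?addr0 => [|j ne_j_j0]; rewrite !mxE.
  under eq_bigr do rewrite !mxE def_h (inj_eq (@to_inj _ _ _ to1 toM _)) eq_sym.
  rewrite (sum_nth_eq _ (fun y => (nth d Ho h' == to y (t_ j0))%:R))
    ?orbit_seq_uniq //.
  by rewrite -def_h nth_uniq ?orbit_seq_uniq // eq_sym.
apply: big1 => w _; rewrite !mxE def_h.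
case: eqP => [/orbit_decomp_inj[||ej _] //|]; last by rewrite mul0r.
  exact: mem_nth.
by rewrite ej eqxx in ne_j_j0.
Qed.

Lemma decomp_mxT_mul : decomp_mx^T *m decomp_mx = 1%:M.
Proof.
rewrite tr_mxrow mul_mxcol_mxrow -(mxdiagZ 1) /mxdiag; apply: eq_mxblock => i j.
apply/matrixP => w w'; rewrite !mxE.
under eq_bigr do rewrite !mxE.
rewrite (sum_nth_eq _ (fun y => (y == to (nth d Wo w') (t_ j))%:R))
  ?orbit_seq_uniq ?mem_orbit_transv //.
case: (eqVneq i j) => [<-|ne_ij]; rewrite ?conform_mx_id !mxE.
  by rewrite (inj_eq (@to_inj _ _ _ to1 toM _)) nth_uniq ?orbit_seq_uniq.
case: eqP => // /orbit_decomp_inj[||eij _]; rewrite ?mem_nth //.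
by rewrite eij eqxx in ne_ij.
Qed.

Lemma decomp_mx_intertwines x :
  seq_rep to d Ho x *m decomp_mx = decomp_mx *m ind_rep H (seq_rep to d Wo) x.
Proof.
rewrite /ind_rep mul_mxrow mul_mxrow_mxblock; apply: eq_mxrow => l.
have [j0 blk_j0] := transv_block_unique x l.
set y := (t_ j0 * x * (t_ l)^-1)%g; have Hy : y \in H by rewrite blk_j0.
rewrite (bigD1 j0) //= Hy big1 ?addr0 => [|j ne_j_j0]; last first.
  by rewrite blk_j0 (negbTE ne_j_j0) mulmx0.
apply/matrixP => h w; rewrite !mxE.
under eq_bigr do rewrite !mxE.
rewrite (sum_nth_eq _ (fun s => (s == to (nth d Wo w) (t_ l))%:R))
  ?orbit_seq_uniq ?(orbit_seq_to toM) ?inE ?mem_nth //.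
under eq_bigr do
  rewrite !mxE mulrC (eq_toV to1 toM (nth d Wo w)) [to _ _ == _]eq_sym.
rewrite (sum_nth_eq _ (fun s => (nth d Ho h == to s (t_ j0))%:R))
  ?orbit_seq_uniq ?(orbit_seq_to toM) ?groupV ?mem_nth //.
rewrite -toM eq_sym (eq_toV to1 toM) -toM eq_sym.
by rewrite /y !invMg invgK !mulgA mulgKV.
Qed.

Theorem perm_rep_orbit_induced :
  rep_iso [set: gT] (seq_rep to d Ho) (ind_rep H (seq_rep to d Wo)).
Proof.
split.
  by apply/anti_leq; rewrite (mulmx1_min decomp_mx_mulT) (mulmx1_min decomp_mxT_mul).
exists decomp_mx; split; last by move=> x _; apply: decomp_mx_intertwines.
by apply/row_freeP; exists decomp_mx^T; apply: decomp_mx_mulT.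
Qed.

End InducedOrbitRep.

Section PermMatrices.
Variable n : nat.

Lemma pmatM (s t : 'S_n) : pmat (s * t)%g = pmat t *m pmat s.
Proof.
apply/matrixP => i j; rewrite !mxE permM (bigD1 (s j)) //= !mxE eqxx mulr1.
by rewrite big1 ?addr0 // => l ne_l; rewrite !mxE (negbTE ne_l) mulr0.
Qed.

Lemma pmat1 : pmat (1%g : 'S_n) = 1%:M.
Proof. by apply/matrixP => i j; rewrite !mxE perm1. Qed.

Lemma mx_act1 A : Defs.act (1%g : SS n) A = A.
Proof. by rewrite /Defs.act /= invg1 pmat1 mul1mx mulmx1. Qed.

Lemma mx_actM A (x y : SS n) : Defs.act (x * y)%g A = Defs.act y (Defs.act x A).
Proof. by case: x y => [x1 x2] [y1 y2]; rewrite /Defs.act /= invMg !pmatM !mulmxA. Qed.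

Lemma pmat_mulmxE (p : 'S_n) (A : 'M[int]_n) i j :
  (pmat p *m A) i j = A (p^-1%g i) j.
Proof.
rewrite !mxE (bigD1 (p^-1%g i)) //= !mxE permKV eqxx mul1r big1 ?addr0 // => l ne_l.
rewrite !mxE; case: eqP => [il|_]; last by rewrite mul0r.
by rewrite il permK eqxx in ne_l.
Qed.

Lemma mulmx_pmatE (q : 'S_n) (A : 'M[int]_n) i j : (A *m pmat q) i j = A i (q j).
Proof.
rewrite !mxE (bigD1 (q j)) //= !mxE eqxx mulr1 big1 ?addr0 // => l ne_l.
by rewrite !mxE (negbTE ne_l) mulr0.
Qed.

End PermMatrices.

Section UnkStabiliser.
Variables n k : nat.

Definition Unk_one (i j : 'I_n) : bool :=
  if (i < k)%N then (k <= j)%N || (i <= j)%N else i == j.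

Lemma UnkE i j : Unk n k i j = (Unk_one i j)%:R.
Proof.
rewrite /Unk /Unk_one !mxE; case: ltnP => //; case: ltnP => //= _ _.
by case: leqP.
Qed.

Lemma Unk_one_diag (i : 'I_n) : Unk_one i i.
Proof. by rewrite /Unk_one leqnn orbT eqxx if_same. Qed.

Lemma Unk_one_lo_hi (i j : 'I_n) : (i < k)%N -> (k <= j)%N -> Unk_one i j.
Proof. by rewrite /Unk_one => -> ->. Qed.

Lemma Unk_one_hi (i j : 'I_n) : (k <= i)%N -> Unk_one i j = (i == j).
Proof. by rewrite /Unk_one ltnNge => ->. Qed.

Section Stabiliser.
Variables p q : 'S_n.
Hypothesis pqU : forall i j, Unk_one (p i) (q j) = Unk_one i j.

Lemma Unk_stab_rows (i : 'I_n) : (p i < k)%N = (i < k)%N.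
Proof.
have [kn|nk] := leqP n k; first by rewrite !(leq_trans (ltn_ord _) kn).
have z_lt_n : (n.-1 < n)%N by rewrite ltn_predL (leq_ltn_trans _ nk).
pose z := Ordinal z_lt_n.
have kz : (k <= z)%N by rewrite -ltnS prednK // (leq_ltn_trans _ nk).
have [ik|ki] := ltnP i k; have [pik|kpi] := ltnP (p i) k => //.
  have /eqP epq : p i == q i by rewrite -Unk_one_hi // pqU Unk_one_diag.
  have /eqP epz : p i == q z by rewrite -Unk_one_hi // pqU Unk_one_lo_hi.
  have /perm_inj eiz : q i = q z by rewrite -epq.
  by move: ik; rewrite eiz ltnNge kz.
have row_i (j : 'I_n) : Unk_one (p i) j -> i = q^-1%g j.
  by rewrite -{1}(permKV q j) pqU Unk_one_hi // => /eqP.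
have /perm_inj epz : q^-1%g (p i) = q^-1%g z.
  by rewrite -(row_i _ (Unk_one_diag _)) -(row_i _ (Unk_one_lo_hi pik kz)).
by move: pik; rewrite epz ltnNge kz.
Qed.

Lemma Unk_stab_cols (j : 'I_n) : (j < k)%N -> (q j < k)%N.
Proof.
move=> jk; rewrite ltnNge; apply/negP => kqj.
pose i := p^-1%g (q j).
have ki : (k <= i)%N by rewrite leqNgt -Unk_stab_rows permKV -leqNgt.
have /eqP eij : i == j by rewrite -Unk_one_hi // -pqU permKV Unk_one_diag.
by move: ki; rewrite eij leqNgt jk.
Qed.

End Stabiliser.

Lemma YknP (s : 'S_n) :
  reflect (forall i : 'I_n, (i < k)%N -> (s i < k)%N) (s \in Ykn n k).
Proof.
rewrite inE; apply: (iffP eqP) => [e i ik|hs].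
  have : s i \in s @: [set i : 'I_n | (i < k)%N] by apply: imset_f; rewrite inE.
  by rewrite e inE.
apply/eqP; rewrite eqEcard card_imset ?leqnn ?andbT; last exact: perm_inj.
by apply/subsetP => _ /imsetP[i + ->]; rewrite !inE => /hs.
Qed.

Lemma group_set_Ykn : group_set (Ykn n k).
Proof.
apply/group_setP; split; first by apply/YknP => i; rewrite perm1.
by move=> s t /YknP hs /YknP ht; apply/YknP => i ik; rewrite permM ht ?hs.
Qed.

Canonical Ykn_group := Group group_set_Ykn.

Lemma Unk_stab_sub g : Defs.act g (Unk n k) = Unk n k -> g \in Hsub n k.
Proof.
case: g => p q /= e.
have pqU i j : Unk_one (p i) (q j) = Unk_one i j.
  have := congr1 (fun M : 'M[int]_n => M (p i) (q j)) e.
  rewrite /Defs.act /= mulmx_pmatE pmat_mulmxE !permK !UnkE.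
  by case: (Unk_one i j); case: (Unk_one _ _).
rewrite /Hsub in_setX; apply/andP; split; apply/YknP => i ik.
  by rewrite (Unk_stab_rows pqU).
exact: (Unk_stab_cols pqU).
Qed.

End UnkStabiliser.

Theorem mainTheorem12 (n k : nat) (hk : (k <= n)%N) :
  rep_iso [set: SS n]
    (perm_rep (Hnk n k))
    (ind_rep (Hsub n k) (perm_rep (Wnk n k))).
Proof.
exact: (@perm_rep_orbit_induced _ _ 0 (fun A x => Defs.act x A) (@mx_act1 n)
          (@mx_actM n) (setX_group (Ykn_group n k) (Ykn_group n k)) (Unk n k)
          (@Unk_stab_sub n k)).
Qed.
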